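(* Let $f,g\in G_B^I$. Then $f\boxtimes g\in G_B^I$ and $f\boxtimes_1 g\in G_B^I$.
   Context: $B$ is a unital algebra over a field $\mathbb K$ of characteristic zero. $\mathrm{Mult}[[B]]$: sequences $f=(f_n)_{n\ge0}$ of multilinear maps $f_n:B^n\to B$; product $(f\cdot g)_n(x_1,\dots,x_n)=\sum_{k=0}^n f_k(x_1,\dots,x_k)g_{n-k}(x_{k+1},\dots,x_n)$; $I=(\delta_{n,1}\mathrm{id}_B)$. $G_B^{\mathrm{inv}}=\{f:f_0\in B^\times\}$, $G_B^{\mathrm{dif}}=\{f:f_0=0,f_1\in GL(B)\}$, $G_B^I=\{I\cdot F:F\in G_B^{\mathrm{inv}}\}$, where $(I\cdot F)_n(x_1,\dots,x_n)=x_1F_{n-1}(x_2,\dots,x_n)$; equivalently $G_B^I=\{f\in G_B^{\mathrm{dif}}: f_1(1)\in B^\times,\ f_n(x_1,\dots,x_n)=x_1f_n(1,x_2,\dots,x_n)\ \forall n\ge1\}$. Planar binary trees: $Y_0=\{|\}$, $Y_n=\{\sigma\vee\tau:\sigma\in Y_k,\tau\in Y_l,k+l=n-1\}$; each $\tau\in Y_n$, $n\ge1$, is uniquely $\tau_1\vee(\tau_2\vee(\cdots\vee(\tau_k\vee|)))$; $j_i=|\tau_1|+\dots+|\tau_i|+i$. $(f\cup g)_|=1$, $(f\cup g)_\tau(x_1,\dots,x_n)=g_k((g\cup f)_{\tau_1}(x_1,\dots,x_{j_1-1})x_{j_1},\dots,(g\cup f)_{\tau_k}(x_{j_{k-1}+1},\dots,x_{j_k-1})x_{j_k})$.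 $R(|)=|$, $R(\sigma\vee\tau)=(|\vee R(\sigma))\vee R(\tau)$. $(f\boxtimes g)_0=g_0$, $(f\boxtimes g)_n(x_1,\dots,x_n)=\sum_{\tau\in Y_n}(f\cup g)_{R(\tau)}(x_1,1,\dots,x_n,1)$; $(f\boxtimes_1 g)_0=0$, $(f\boxtimes_1 g)_n(x_1,\dots,x_n)=\sum_{\tau\in Y_{n-1}}(g\cup f)_{|\vee R(\tau)}(x_1,1,x_2,1,\dots,1,x_n)$ for $n\ge1$. *)

From HB Require Import structures.
From mathcomp Require Import all_boot all_order all_algebra.
Set Implicit Arguments. Unset Strict Implicit. Unset Printing Implicit Defensive.
Import GRing.Theory.
Local Open Scope ring_scope.

(* An element f of Mult[[B]] is represented as f : seq B -> B;
   f_n is the restriction of f to lists of length n. *)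

Section Defs.
Variables (K : fieldType) (B : algType K).

Definition multilinear (f : seq B -> B) : Prop :=
  forall (l r : seq B) (a : K) (x y : B),
    f (l ++ (a *: x + y) :: r) = a *: f (l ++ x :: r) + f (l ++ y :: r).

Definition is_unitB (x : B) : Prop := exists y : B, x * y = 1 /\ y * x = 1.

Definition mprod (f g : seq B -> B) (xs : seq B) : B :=
  \sum_(k < (size xs).+1) f (take k xs) * g (drop k xs).

Definition Iseq (xs : seq B) : B := if xs is [:: x] then x else 0.

(* G_B^I = { I . F : F in G_B^inv } *)
Definition in_GI (f : seq B -> B) : Prop :=
  exists F : seq B -> B,
    [/\ multilinear F, is_unitB (F [::]) & forall xs, f xs = mprod Iseq F xs].

End Defs.

Inductive tree : Type := Leaf | Node of tree & tree.

Fixpoint tsize (t : tree) : nat :=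
  match t with Leaf => 0 | Node l r => (tsize l + tsize r).+1 end.

(* treesF fuel n enumerates Y_n (fuel >= n suffices) *)
Fixpoint treesF (fuel n : nat) : seq tree :=
  match fuel with
  | 0 => if n is 0 then [:: Leaf] else [::]
  | fuel'.+1 =>
    match n with
    | 0 => [:: Leaf]
    | n'.+1 => flatten [seq [seq Node s t | s <- treesF fuel' k, t <- treesF fuel' (n' - k)]
                       | k <- iota 0 n'.+1]
    end
  end.

Definition Y (n : nat) : seq tree := treesF n n.

Fixpoint Rtree (t : tree) : tree :=
  match t with Leaf => Leaf | Node s u => Node (Node Leaf (Rtree s)) (Rtree u) end.

Section Cup.
Variables (K : fieldType) (B : algType K).

(* For tau = tau_1 v (tau_2 v ( ... v (tau_k v |))),
   cup f g tau xs = g [:: (g cup f)_{tau_1}(block_1) x_{j_1}; ...;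
                          (g cup f)_{tau_k}(block_k) x_{j_k}],
   computed by the auxiliary [cup_args f g] along the right spine. *)
Fixpoint cup (f g : seq B -> B) (t : tree) (xs : seq B) {struct t} : B :=
  match t with
  | Leaf => 1
  | Node l r =>
      g ((cup g f l (take (tsize l) xs) * nth 0 xs (tsize l))
           :: cup_args f g r (drop (tsize l).+1 xs))
  end
with cup_args (f g : seq B -> B) (u : tree) (ys : seq B) {struct u} : seq B :=
  match u with
  | Leaf => [::]
  | Node l r =>
      (cup g f l (take (tsize l) ys) * nth 0 ys (tsize l))
        :: cup_args f g r (drop (tsize l).+1 ys)
  end.

Definition boxtimes (f g : seq B -> B) (xs : seq B) : B :=
  if xs is [::] then g [::]
  else \sum_(t <- Y (size xs)) cup f g (Rtree t) (flatten [seq [:: x; 1] | x <- xs]).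

Definition boxtimes1 (f g : seq B -> B) (xs : seq B) : B :=
  if xs is x1 :: xs' then
    \sum_(t <- Y (size xs')) cup g f (Node Leaf (Rtree t))
                               (x1 :: flatten [seq [:: 1; x] | x <- xs'])
  else 0.

End Cup.

From Pilot Require Import Defs.
From HB Require Import structures.
From mathcomp Require Import all_boot all_order all_algebra zify.
Set Implicit Arguments. Unset Strict Implicit. Unset Printing Implicit Defensive.
Import GRing.Theory.
Local Open Scope ring_scope.

(* An element h of G_B^I is determined by its tail h(1, -), through
   h(x, xs) = x h(1, xs).  For every tree t of positive size, R(t) has the
   shape (| v R(s)) v R(u), so the first argument x of f boxtimes g enters
   (f cup g)_{R(t)} only as the first argument of an inner f, whence it can
   be pulled out through f and then through the outer g; similarly x enters
   (g cup f)_{| v R(t)} as the first argument of the outer f.  Each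
   (f cup g)_t is multilinear because every input occupies exactly one slot
   of the argument list of its outer map, and that slot depends linearly on
   it.  Finally (f boxtimes g)_1(1) = g_1(f_1(1)) and
   (f boxtimes_1 g)_1(1) = f_1(1) are invertible. *)

Fixpoint tree_eqb (t u : tree) : bool :=
  match t, u with
  | Leaf, Leaf => true
  | Node a b, Node c d => tree_eqb a c && tree_eqb b d
  | _, _ => false
  end.

Lemma tree_eqP : Equality.axiom tree_eqb.
Proof.
elim=> [|a IHa b IHb] [|c d] /=; try by constructor.
case: (IHa c) => [->|neq_ac]; last by constructor; case.
case: (IHb d) => [->|neq_bd]; last by constructor; case.
by constructor.
Qed.

HB.instance Definition _ := hasDecEq.Build tree tree_eqP.

Lemma tsize_treesF fuel n t : t \in treesF fuel n -> Defs.tsize t = n.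
Proof.
elim: fuel n t => [|fuel IH] [|n] t; try by rewrite /= inE => /eqP->.
  by rewrite /= in_nil.
move=> /flattenP[_ /mapP[k k_n ->] /allpairsP[[s u] [/= s_k u_nk ->]]] /=.
by rewrite (IH _ _ s_k) (IH _ _ u_nk); move: k_n; rewrite mem_iota; lia.
Qed.

Lemma tsize_Rtree t : Defs.tsize (Rtree t) = (2 * Defs.tsize t)%N.
Proof. by elim: t => //= s IHs u IHu; rewrite IHs IHu; lia. Qed.

Lemma Y_succ_node n t : t \in Y n.+1 -> exists s u, t = Node s u.
Proof. by case: t => [/tsize_treesF|s u _] //; exists s, u. Qed.

Section SlotLinearity.
Variables (K : fieldType) (B : algType K).
Implicit Types (h : seq B -> B) (P : seq B -> seq B).

Definition multilinear_on h N := forall l r a x y, (size l + size r).+1 = N ->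
  h (l ++ (a *: x + y) :: r) = a *: h (l ++ x :: r) + h (l ++ y :: r).

Definition slotwise_linear P N := forall l r a x y, (size l + size r).+1 = N ->
  exists p q u v, [/\ P (l ++ (a *: x + y) :: r) = p ++ (a *: u + v) :: q,
                      P (l ++ x :: r) = p ++ u :: q
                    & P (l ++ y :: r) = p ++ v :: q].

Lemma multilinear_on_comp g P N :
  multilinear g -> slotwise_linear P N -> multilinear_on (g \o P) N.
Proof.
move=> mg linP l r a x y lr_N.
by have [p [q [u [v [/= -> -> ->]]]]] := linP l r a x y lr_N; apply: mg.
Qed.

Lemma slotwise_linear_cons h P n m :
  multilinear_on h n -> slotwise_linear P m ->
  slotwise_linear (fun ys => h (take n ys) * nth 0 ys n :: P (drop n.+1 ys)) (n + m).+1.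
Proof.
move=> mh linP l r a x y lr_N.
have splitE L w R : size L = n ->
    h (take n (L ++ w :: R)) * nth 0 (L ++ w :: R) n :: P (drop n.+1 (L ++ w :: R))
    = h L * w :: P R.
  move=> <-; rewrite take_size_cat // nth_cat ltnn subnn.
  by rewrite -cat_rcons drop_size_cat ?size_rcons.
(* The varying input lies in the block fed to h, is the multiplier, or lies in
   the tail fed to P. *)
case: (ltngtP (size l) n) => [l_n|n_l|l_n].
- have [k def_n] : exists k, n = (size l + k.+1)%N by exists (n - size l).-1; lia.
  have k_r : (k < size r)%N by lia.
  have splitr z : l ++ z :: r = (l ++ z :: take k r) ++ nth 0 r k :: drop k.+1 r.
    by rewrite -catA /= -(drop_nth 0 k_r) cat_take_drop.
  have size_lr z : size (l ++ z :: take k r) = n.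
    by rewrite size_cat /= size_takel ?def_n // ltnW.
  exists [::], (P (drop k.+1 r)), (h (l ++ x :: take k r) * nth 0 r k),
    (h (l ++ y :: take k r) * nth 0 r k).
  rewrite !splitr !splitE ?size_lr //=.
  by rewrite mh ?mulrDl ?scalerAl // -(size_lr x) size_cat addnS.
- have splitl z : l ++ z :: r = take n l ++ nth 0 l n :: (drop n.+1 l ++ z :: r).
    by rewrite -cat_cons -(drop_nth 0 n_l) catA cat_take_drop.
  have [p [q [u [v [Pa Px Py]]]]] := linP (drop n.+1 l) r a x y
    ltac:(rewrite size_drop; lia).
  exists (h (take n l) * nth 0 l n :: p), q, u, v.
  by rewrite !splitl !(splitE (take n l)) ?size_takel ?(ltnW n_l) // Pa Px Py.
- exists [::], (P r), (h l * x), (h l * y).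
  by rewrite !(splitE l) // mulrDr scalerAr.
Qed.

Lemma multilinear_on_cup_of_args f g t : multilinear g ->
  slotwise_linear (cup_args f g t) (Defs.tsize t) ->
  multilinear_on (cup f g t) (Defs.tsize t).
Proof.
by case: t => [|s u] mg lin_t; [move=> l r /=; lia | apply: multilinear_on_comp].
Qed.

Lemma slotwise_linear_cup_args t f g : multilinear f -> multilinear g ->
  slotwise_linear (cup_args f g t) (Defs.tsize t).
Proof.
elim: t f g => [|s IHs u IHu] f g mf mg; first by move=> l r /=; lia.
exact: slotwise_linear_cons
  (multilinear_on_cup_of_args mf (IHs g f mg mf)) (IHu f g mf mg).
Qed.

Lemma multilinear_on_cup f g t : multilinear f -> multilinear g ->
  multilinear_on (cup f g t) (Defs.tsize t).
Proof.
by move=> mf mg; apply: multilinear_on_cup_of_args mg (slotwise_linear_cup_args mf mg).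
Qed.

End SlotLinearity.

Lemma size_flatten_map_uniform (S T : Type) (F : S -> seq T) k (s : seq S) :
  (forall w, size (F w) = k) -> size (flatten (map F s)) = (k * size s)%N.
Proof.
by move=> size_F; elim: s => [|w s IH] /=; rewrite ?muln0 // size_cat size_F IH mulnS.
Qed.

Section GroupGI.
Variables (K : fieldType) (B : algType K).
Implicit Types (f g h F : seq B -> B).

Lemma mprod_Iseq_nil F : mprod (@Iseq K B) F [::] = 0.
Proof. by rewrite /mprod big_ord_recl big_ord0 /= mul0r addr0. Qed.

Lemma mprod_Iseq_cons F x xs : mprod (@Iseq K B) F (x :: xs) = x * F xs.
Proof.
rewrite /mprod /= big_ord_recl /= mul0r add0r big_ord_recl /= take0 drop0.
rewrite big1 ?addr0 // => i _.
by case: xs i => [[]|y ys i] //=; rewrite mul0r.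
Qed.

Lemma in_GIE h : in_GI h ->
  exists F, [/\ h [::] = 0, forall x xs, h (x :: xs) = x * F xs & is_unitB (F [::])].
Proof.
case=> F [_ uF hF]; exists F; split=> // [|x xs]; rewrite hF.
  exact: mprod_Iseq_nil.
exact: mprod_Iseq_cons.
Qed.

Lemma in_GI_intro h : h [::] = 0 -> (forall x xs, h (x :: xs) = x * h (1 :: xs)) ->
  multilinear (fun xs => h (1 :: xs)) -> is_unitB (h [:: 1]) -> in_GI h.
Proof.
move=> h0 h_cons mh uh; exists (fun xs => h (1 :: xs)); split=> // -[|x xs].
  by rewrite mprod_Iseq_nil.
by rewrite mprod_Iseq_cons.
Qed.

Lemma in_GI_multilinear h : in_GI h -> multilinear h.
Proof.
case=> F [mF _ hF] [|x0 l] r a x y; rewrite !hF !mprod_Iseq_cons.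
  by rewrite mulrDl scalerAl.
by rewrite mF mulrDr scalerAr.
Qed.

Lemma is_unitBM (u v : B) : is_unitB u -> is_unitB v -> is_unitB (u * v).
Proof.
case=> u' [uu' u'u] [v' [vv' v'v]]; exists (v' * u'); split.
  by rewrite mulrA -(mulrA u) vv' mulr1.
by rewrite mulrA -(mulrA v') u'u mulr1.
Qed.

Lemma big_seq_scale_add (I : eqType) (s : seq I) (F G H : I -> B) a :
  (forall i, i \in s -> F i = a *: G i + H i) ->
  \sum_(i <- s) F i = a *: \sum_(i <- s) G i + \sum_(i <- s) H i.
Proof. by move=> FGH; rewrite (eq_big_seq _ FGH) big_split /= scaler_sumr. Qed.

Lemma boxtimes_cons f g x xs : boxtimes f g (x :: xs) =
  \sum_(t <- Y (size xs).+1)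
    cup f g (Rtree t) (x :: 1 :: flatten [seq [:: w; 1] | w <- xs]).
Proof. by []. Qed.

Lemma boxtimes1_cons f g x xs : boxtimes1 f g (x :: xs) =
  \sum_(t <- Y (size xs))
    cup g f (Node Leaf (Rtree t)) (x :: flatten [seq [:: 1; w] | w <- xs]).
Proof. by []. Qed.

Lemma boxtimes_in_GI f g : in_GI f -> in_GI g -> in_GI (boxtimes f g).
Proof.
move=> Gf Gg; have mf := in_GI_multilinear Gf; have mg := in_GI_multilinear Gg.
have [Ff [_ f_cons uf]] := in_GIE Gf; have [Fg [g0 g_cons ug]] := in_GIE Gg.
apply: in_GI_intro => [|x xs|l r a x y|].
- exact: g0.
- rewrite !boxtimes_cons mulr_sumr; apply: eq_big_seq => t /Y_succ_node[s [u ->]].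
  by rewrite /= !g_cons !f_cons !mul1r !mulrA.
- have flattenE z : flatten [seq [:: w; 1] | w <- l ++ z :: r] =
      flatten [seq [:: w; 1] | w <- l]
        ++ z :: 1 :: flatten [seq [:: w; (1 : B)] | w <- r].
    by rewrite map_cat flatten_cat.
  cbv beta; rewrite !boxtimes_cons !size_cat.
  apply: big_seq_scale_add => t t_Y; rewrite !flattenE.
  apply: (multilinear_on_cup mf mg (l := 1 :: 1 :: flatten [seq [:: w; 1] | w <- l])).
  rewrite tsize_Rtree (tsize_treesF t_Y) /= !(size_flatten_map_uniform (k := 2)) //.
  lia.
- rewrite /boxtimes /= big_cons big_nil /= addr0 !g_cons !f_cons !mul1r !mulr1.
  exact: is_unitBM.
Qed.

Lemma boxtimes1_in_GI f g : in_GI f -> in_GI g -> in_GI (boxtimes1 f g).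
Proof.
move=> Gf Gg; have mf := in_GI_multilinear Gf; have mg := in_GI_multilinear Gg.
have [Ff [_ f_cons uf]] := in_GIE Gf.
apply: in_GI_intro => [|x xs|l r a x y|] //.
- rewrite !boxtimes1_cons mulr_sumr; apply: eq_bigr => t _.
  by rewrite /= !f_cons !mul1r.
- have flattenE z : 1 :: flatten [seq [:: 1; w] | w <- l ++ z :: r] =
      rcons (1 :: flatten [seq [:: 1; w] | w <- l]) 1
        ++ z :: flatten [seq [:: (1 : B); w] | w <- r].
    by rewrite map_cat flatten_cat cat_rcons.
  cbv beta; rewrite !boxtimes1_cons !size_cat.
  apply: big_seq_scale_add => t t_Y; rewrite !flattenE.
  apply: (multilinear_on_cup mg mf).
  rewrite /= tsize_Rtree (tsize_treesF t_Y) size_rcons /=.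
  rewrite !(size_flatten_map_uniform (k := 2)) //.
  lia.
- by rewrite /boxtimes1 /= big_cons big_nil /= addr0 !f_cons !mul1r.
Qed.

End GroupGI.

Theorem lemma3 (K : fieldType) (charK0 : [pchar K] =i pred0)
    (B : algType K) (f g : seq B -> B) :
  in_GI f -> in_GI g -> in_GI (boxtimes f g) /\ in_GI (boxtimes1 f g).
Proof. by move=> Gf Gg; split; [apply: boxtimes_in_GI | apply: boxtimes1_in_GI]. Qed.
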